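(* Let $\star$ be a state over time function satisfying axioms (E) and (P). Then for all channels $\mathcal{E}_{B|A}$, $\mathcal{F}_{C|B}$, $\mathcal{G}_{D|C}$ and every $\rho_A\in\mathfrak{S}(A)$, $$\mathrm{Tr}_{BC}\big[\mathcal{G}_{D|C}\star(\mathcal{F}_{C|B}\star(\mathcal{E}_{B|A}\star\rho_A))\big]=(\mathcal{G}\circ\mathcal{F}\circ\mathcal{E})_{D|A}\star\rho_A,$$ where each star applied to an operator on several systems acts on the indicated subsystem, with the other systems as spectators as in axiom (E).
   Context: Systems are finite-dimensional Hilbert spaces; $\mathfrak{B}(A)$ linear operators, $\mathfrak{S}(A)$ density operators, $\mathfrak{C}(A,B)$ quantum channels (CPTP maps $\mathfrak{B}(A)\to\mathfrak{B}(B)$). A state over time function assigns to all systems $A,B$ a map $\star:\mathfrak{C}(A,B)\times\mathfrak{S}(A)\to\mathfrak{B}(A\otimes B)$, $(\mathcal{E},\rho)\mapsto\mathcal{E}_{B|A}\star\rho_A$, with $\mathrm{Tr}_A[\mathcal{E}\star\rho]=\mathcal{E}(\rho)$ and $\mathrm{Tr}_B[\mathcal{E}\star\rho]=\rho$, extended homogeneously by $(\lambda\mathcal{E})\star\rho=\mathcal{E}\star(\lambda\rho)=\lambda(\mathcal{E}\star\rho)$, $\lambda\in\mathbb{C}$. A quantum state over spacetime on $A\otimes E$ is either a density operator on $A\otimes E$ or an operator of the form $\mathcal{F}\star\sigma$ (possibly iterated). Axiom (E): for all systems $A,B,E$, every quantum state over spacetime $\rho_{AE}$ and every channel $\mathcal{E}_{B|A}$,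 an operator $\mathcal{E}_{B|A}\star\rho_{AE}$ on $A\otimes B\otimes E$ is defined such that for every completely positive trace-non-increasing map $\mathcal{I}_E$ on $E$, $\mathcal{I}_E[\mathcal{E}\star\rho_{AE}]=\mathcal{E}\star\mathcal{I}_E(\rho_{AE})$, and $\mathrm{Tr}_A[\mathcal{E}\star\rho_{AE}]=(\mathcal{E}\otimes\mathrm{id}_E)(\rho_{AE})$. Axiom (P): for all channels $\mathcal{E}_{B|A}$, $\mathcal{F}_{C|B}$ and states $\rho_A$, $\mathrm{Tr}_B[\mathcal{F}_{C|B}\star(\mathcal{E}_{B|A}\star\rho_A)]=(\mathcal{F}\circ\mathcal{E})_{C|A}\star\rho_A$, with $\mathcal{F}_{C|B}\star(\cdot)$ acting on the $B$-part (spectator $A$). *)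

(* Scalars: an arbitrary numClosedFieldType K (e.g. complex R
   for a real closed field R); systems: finite types (orthonormal basis labels);
   the operator algebra B(A) is the type of K-valued matrices indexed by A. *)
From HB Require Import structures.
From mathcomp Require Import all_boot all_order all_algebra.
Set Implicit Arguments. Unset Strict Implicit. Unset Printing Implicit Defensive.
Import Order.TTheory GRing.Theory Num.Theory.
Local Open Scope ring_scope.

Section Quantum.
Variable K : numClosedFieldType.

Definition Op (T : finType) := T -> T -> K.

Definition opscale (T : finType) (a : K) (M : Op T) : Op T := fun i j => a * M i j.

Definition trace (T : finType) (M : Op T) : K := \sum_(i : T) M i i.

Definition hermitian (T : finType) (M : Op T) : Prop :=
  forall i j, M j i = (M i j)^*.

Definition psd (T : finType) (M : Op T) : Prop :=
  hermitian M /\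
  forall v : T -> K, 0 <= \sum_(i : T) \sum_(j : T) (v i)^* * M i j * v j.

Definition density (T : finType) (M : Op T) : Prop := psd M /\ trace M = 1.

Definition munit (T : finType) (a b : T) : Op T :=
  fun i j => ((i == a) && (j == b))%:R.

Definition linmap (S T : finType) (f : Op S -> Op T) : Prop :=
  forall (a : K) (M N : Op S),
    f (fun i j => a * M i j + N i j) = (fun i j => a * f M i j + f N i j).

(* f applied to the first tensor factor of E (x) X, identity on X *)
Definition on1 (E E' X : finType) (f : Op E -> Op E') (M : Op (E * X)%type)
  : Op (E' * X)%type :=
  fun p q => \sum_(e : E) \sum_(e2 : E) M (e, p.2) (e2, q.2) * f (munit e e2) p.1 q.1.

(* f applied to the second tensor factor of X (x) A, identity on X *)
Definition on2 (X A B : finType) (f : Op A -> Op B) (M : Op (X * A)%type)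
  : Op (X * B)%type :=
  fun p q => \sum_(a : A) \sum_(a2 : A) M (p.1, a) (q.1, a2) * f (munit a a2) p.2 q.2.

(* f applied to the factor E of (E (x) A) (x) B *)
Definition on1_3 (E E' A B : finType) (f : Op E -> Op E') (M : Op ((E * A) * B)%type)
  : Op ((E' * A) * B)%type :=
  fun p q => \sum_(e : E) \sum_(e2 : E)
     M ((e, p.1.2), p.2) ((e2, q.1.2), q.2) * f (munit e e2) p.1.1 q.1.1.

Definition trL (A B : finType) (M : Op (A * B)%type) : Op B :=
  fun b b2 => \sum_(a : A) M (a, b) (a, b2).
Definition trR (A B : finType) (M : Op (A * B)%type) : Op A :=
  fun a a2 => \sum_(b : B) M (a, b) (a2, b).
Definition trmid (X Y Z : finType) (M : Op ((X * Y) * Z)%type) : Op (X * Z)%type :=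
  fun p q => \sum_(y : Y) M ((p.1, y), p.2) ((q.1, y), q.2).
Definition trBC (A B C D : finType) (M : Op (((A * B) * C) * D)%type) : Op (A * D)%type :=
  fun p q => \sum_(b : B) \sum_(c : C) M (((p.1, b), c), p.2) (((q.1, b), c), q.2).

Definition completely_positive (S T : finType) (f : Op S -> Op T) : Prop :=
  forall (X : finType) (M : Op (S * X)%type), psd M -> psd (on1 f M).

Definition channel (S T : finType) (f : Op S -> Op T) : Prop :=
  linmap f /\ completely_positive f /\ forall M, trace (f M) = trace M.

Definition cptni (S T : finType) (f : Op S -> Op T) : Prop :=
  linmap f /\ completely_positive f /\ forall M, psd M -> trace (f M) <= trace M.

Definition star_type := forall A B : finType, (Op A -> Op B) -> Op A -> Op (A * B)%type.
(* the extended star with spectator E: operator on E (x) A  |->  operator on (E (x) A) (x) B *)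
Definition starX_type :=
  forall E A B : finType, (Op A -> Op B) -> Op (E * A)%type -> Op ((E * A) * B)%type.

Definition is_state_over_time (star : star_type) : Prop :=
  forall (A B : finType) (f : Op A -> Op B) (rho : Op A),
    channel f -> density rho ->
    [/\ trL (star A B f rho) = f rho,
        trR (star A B f rho) = rho &
        forall l : K,
          star A B (fun M => opscale l (f M)) rho = opscale l (star A B f rho) /\
          star A B f (opscale l rho) = opscale l (star A B f rho)].

Inductive qsst (star : star_type) (starX : starX_type) : forall T : finType, Op T -> Prop :=
  | qsst_dens (T : finType) (rho : Op T) : density rho -> qsst star starX rho
  | qsst_base (A B : finType) (f : Op A -> Op B) (rho : Op A) :
      channel f -> density rho -> qsst star starX (star A B f rho)
  | qsst_ext (E A B : finType) (f : Op A -> Op B) (sigma : Op (E * A)%type) :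
      channel f -> qsst star starX sigma -> qsst star starX (starX E A B f sigma).

Definition axiomE (star : star_type) (starX : starX_type) : Prop :=
  forall (A B E : finType) (f : Op A -> Op B) (rho : Op (E * A)%type),
    channel f -> qsst star starX rho ->
    (forall (E' : finType) (I : Op E -> Op E'), cptni I ->
       on1_3 I (starX E A B f rho) = starX E' A B f (on1 I rho)) /\
    trmid (starX E A B f rho) = on2 f rho.

Definition axiomP (star : star_type) (starX : starX_type) : Prop :=
  forall (A B C : finType) (e : Op A -> Op B) (f : Op B -> Op C) (rho : Op A),
    channel e -> channel f -> density rho ->
    trmid (starX A B C f (star A B e rho)) = star A C (f \o e) rho.

End Quantum.

From HB Require Import structures.
From mathcomp Require Import all_boot all_order all_algebra.
From Stdlib Require Import FunctionalExtensionality.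
Set Implicit Arguments. Unset Strict Implicit. Unset Printing Implicit Defensive.
Import Order.TTheory GRing.Theory Num.Theory.
Local Open Scope ring_scope.

(* Tr_BC is Tr_B followed by Tr_C, and Tr_B acts on the spectator A (x) B of the
   outer star.  Tr_B is completely positive and trace preserving, so by (E) it
   commutes with G *, and G * (Tr_B [F * (E * rho)]) = G * ((F o E) * rho) by (P).
   Tracing out C and applying (P) once more, now to the channel F o E, gives
   (G o F o E) * rho. *)

Section Operators.
Variable K : numClosedFieldType.

Lemma op_ext (T : finType) (M N : Op K T) : (forall i j, M i j = N i j) -> M = N.
Proof.
by move=> eqMN; apply: functional_extensionality => i;
  apply: functional_extensionality => j; exact: eqMN.
Qed.

Lemma sum_munit (T : finType) (F : T -> T -> K) (x y : T) :
  \sum_(e : T) \sum_(e2 : T) F e e2 * munit K e e2 x y = F x y.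
Proof.
rewrite /munit (bigD1 x) //= (bigD1 y) //= !eqxx mulr1.
rewrite big1 ?addr0 => [|e2 /negbTE neq]; last by rewrite [y == e2]eq_sym neq andbF mulr0.
rewrite big1 ?addr0 // => e neq; apply: big1 => e2 _.
by rewrite [x == e]eq_sym (negbTE neq) mulr0.
Qed.

Lemma sum_trR_munit (A B : finType) (F : Op K (A * B)%type) (a a2 : A) :
  \sum_(e : A * B) \sum_(e2 : A * B) F e e2 * trR (munit K e e2) a a2
  = \sum_(b : B) F (a, b) (a2, b).
Proof.
rewrite /trR.
under eq_bigr => e _ do under eq_bigr => e2 _ do rewrite mulr_sumr.
under eq_bigr => e _ do rewrite exchange_big.
by rewrite exchange_big; apply: eq_bigr => b _; rewrite sum_munit.
Qed.

Lemma on1_trR (A B C : finType) (M : Op K ((A * B) * C)%type) :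
  on1 (@trR K A B) M = trmid M.
Proof. by apply: op_ext => p q; rewrite /on1 sum_trR_munit. Qed.

Lemma trBC_trmid_on1_3 (A B C D : finType) (M : Op K (((A * B) * C) * D)%type) :
  trBC M = trmid (on1_3 (@trR K A B) M).
Proof.
apply: op_ext => p q; rewrite /trBC /trmid /on1_3 /=.
by under [in RHS]eq_bigr => c _ do rewrite sum_trR_munit; rewrite exchange_big.
Qed.

Lemma sum_partition (I J : finType) (phi : I -> J) (G : I -> K) (H : J -> K) :
  \sum_(i : I) G i * H (phi i) = \sum_(j : J) (\sum_(i | phi i == j) G i) * H j.
Proof.
rewrite (partition_big phi predT) //; apply: eq_bigr => j _.
by rewrite mulr_suml; apply: eq_bigr => i /eqP <-.
Qed.

Lemma psd_compose (I J : finType) (phi : I -> J) (M : Op K J) :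
  psd M -> psd (fun i i2 => M (phi i) (phi i2)).
Proof.
move=> [hermM posM]; split=> [i i2 | v]; first exact: hermM.
(* The form of the compression at [v] is the form of [M] at the pushforward of [v]. *)
pose w j := \sum_(i | phi i == j) v i.
suff -> : \sum_i \sum_i2 (v i)^* * M (phi i) (phi i2) * v i2
        = \sum_j \sum_k (w j)^* * M j k * w k by exact: posM.
transitivity (\sum_i (v i)^* * \sum_k M (phi i) k * w k).
  apply: eq_bigr => i _.
  under eq_bigr => i2 _ do rewrite mulrC.
  rewrite (sum_partition phi v (fun k => (v i)^* * M (phi i) k)) mulr_sumr.
  by apply: eq_bigr => k _; rewrite mulrC mulrA.
rewrite (sum_partition phi (fun i => (v i)^*) (fun j => \sum_k M j k * w k)).
by apply: eq_bigr => j _; rewrite -rmorph_sum mulr_sumr; apply: eq_bigr => k _; rewrite mulrA.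
Qed.

Lemma psd_sum (T I : finType) (Ms : I -> Op K T) :
  (forall y, psd (Ms y)) -> psd (fun i j => \sum_(y : I) Ms y i j).
Proof.
move=> psdMs; split=> [i j | v].
  by rewrite rmorph_sum; apply: eq_bigr => y _; case: (psdMs y) => hermM _; exact: hermM.
under eq_bigr => i _ do under eq_bigr => j _ do rewrite mulr_sumr mulr_suml.
under eq_bigr => i _ do rewrite exchange_big.
by rewrite exchange_big sumr_ge0 // => y _; case: (psdMs y) => _; apply.
Qed.

Lemma psd_trmid (A B C : finType) (M : Op K ((A * B) * C)%type) :
  psd M -> psd (trmid M).
Proof.
move=> psdM; apply: psd_sum => b.
exact: (psd_compose (fun p : A * C => ((p.1, b), p.2)) psdM).
Qed.

Lemma trace_trR (A B : finType) (M : Op K (A * B)%type) : trace (trR M) = trace M.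
Proof. by rewrite /trace /trR pair_bigA; apply: eq_bigr => -[]. Qed.

Lemma cptni_trR (A B : finType) : cptni (@trR K A B).
Proof.
split; [|split].
- move=> a M N; apply: op_ext => i j.
  by rewrite /trR big_split /= mulr_sumr.
- by move=> X M psdM; rewrite on1_trR; apply: psd_trmid.
- by move=> M _; rewrite trace_trR.
Qed.

Section Linearity.
Variables (S T : finType) (f : Op K S -> Op K T).
Hypothesis linf : linmap f.

Lemma linmap0 : f (fun _ _ => 0) = fun _ _ => 0.
Proof.
have := linf (-1) (fun _ _ => 0) (fun _ _ => 0).
have -> : (fun i j : S => -1 * 0 + 0) = (fun _ _ => 0 : K).
  by apply: op_ext => i j; rewrite mulr0 addr0.
by move=> ->; apply: op_ext => i j; rewrite mulN1r addNr.
Qed.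

Lemma linmap_sum (I : Type) (s : seq I) (c : I -> K) (U : I -> Op K S) :
  f (fun i j => \sum_(x <- s) c x * U x i j) = fun i j => \sum_(x <- s) c x * f (U x) i j.
Proof.
elim: s => [|x s IHs].
  have -> : (fun i j : S => \sum_(y <- [::]) c y * U y i j) = fun _ _ => 0.
    by apply: op_ext => i j; rewrite big_nil.
  by rewrite linmap0; apply: op_ext => i j; rewrite big_nil.
have -> : (fun i j : S => \sum_(y <- x :: s) c y * U y i j)
        = fun i j => c x * U x i j + (fun i j => \sum_(y <- s) c y * U y i j) i j.
  by apply: op_ext => i j; rewrite big_cons.
by rewrite linf IHs; apply: op_ext => i j; rewrite big_cons.
Qed.

Lemma linmap_expand_munit (N : Op K S) :
  f N = fun i j => \sum_(e : S) \sum_(e2 : S) N e e2 * f (munit K e e2) i j.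
Proof.
rewrite [in LHS](_ : N = fun i j => \sum_(p : S * S) N p.1 p.2 * munit K p.1 p.2 i j).
  by rewrite linmap_sum; apply: op_ext => i j; rewrite pair_bigA.
apply: op_ext => i j.
by rewrite -(pair_bigA _ (fun e e2 => N e e2 * munit K e e2 i j)) sum_munit.
Qed.

End Linearity.

Lemma on1_comp (A B C X : finType)
  (e : Op K A -> Op K B) (f : Op K B -> Op K C) (M : Op K (A * X)%type) :
  linmap f -> on1 (f \o e) M = on1 f (on1 e M).
Proof.
move=> linf; apply: op_ext => p q; rewrite /on1 /=.
(* After expanding [e |a><a2|] in matrix units both sides are the same fourfold sum. *)
under eq_bigr => a _ do under eq_bigr => a2 _ do
  rewrite (linmap_expand_munit linf (e (munit K a a2))) mulr_sumr.
under eq_bigr => a _ do under eq_bigr => a2 _ do under eq_bigr => b _ do rewrite mulr_sumr.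
under [RHS]eq_bigr => b _ do under eq_bigr => b2 _ do rewrite mulr_suml.
under [RHS]eq_bigr => b _ do under eq_bigr => b2 _ do under eq_bigr => a _ do rewrite mulr_suml.
under eq_bigr => a _ do rewrite exchange_big.
under eq_bigr => a _ do under eq_bigr => b _ do rewrite exchange_big.
rewrite exchange_big; under eq_bigr => b _ do rewrite exchange_big.
do 4 (apply: eq_bigr => ? _); by rewrite !mulrA.
Qed.

Lemma channel_comp (A B C : finType) (e : Op K A -> Op K B) (f : Op K B -> Op K C) :
  channel e -> channel f -> channel (f \o e).
Proof.
move=> [line [cpe tre]] [linf [cpf trf]]; split; [|split].
- by move=> a M N; rewrite /= line linf.
- by move=> X M psdM; rewrite on1_comp //; apply/cpf/cpe.
- by move=> M; rewrite /= trf tre.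
Qed.

End Operators.

Theorem proposition7 (K : numClosedFieldType)
  (star : star_type K) (starX : starX_type K) :
  is_state_over_time star -> axiomE star starX -> axiomP star starX ->
  forall (A B C D : finType) (e : Op K A -> Op K B) (f : Op K B -> Op K C)
         (g : Op K C -> Op K D) (rho : Op K A),
    channel e -> channel f -> channel g -> density rho ->
    trBC (starX (A * B)%type C D g (starX A B C f (star A B e rho)))
    = star A D (g \o f \o e) rho.
Proof.
move=> _ axE axP A B C D e f g rho che chf chg rho_dens.
have sst_e : qsst star starX (star A B e rho) by apply: qsst_base.
have sst_fe : qsst star starX (starX A B C f (star A B e rho)) by apply: qsst_ext.
have [commute_cptni _] := axE _ _ _ g _ chg sst_fe.
rewrite trBC_trmid_on1_3 (commute_cptni _ _ (cptni_trR K A B)) on1_trR axP //.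
exact: axP (channel_comp che chf) chg rho_dens.
Qed.
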